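(* Let $\alpha,\beta,\gamma>0$ and let $X$ have the hyper-exponential (generalized gamma) density $$\rho(t)=\frac{\gamma\,\beta^{-\alpha/\gamma}}{\Gamma(\alpha/\gamma)}\,t^{\alpha-1}\exp(-t^\gamma/\beta),\qquad t>0.$$ Then, for every choice of the parameters $\alpha,\beta,\gamma>0$, the distribution of $X$ is $q$-moment determinate for every $q\in(0,1)$ (even though it is moment indeterminate in the classical sense when $\gamma\in(0,\tfrac12)$).
   Context: For $0<q<1$: a $q$-density of $X\ge0$ is a function $f$ on $(0,\infty)$ with $F_X(x)=x(1-q)\sum_{j\ge0}f(xq^j)q^j$ for all $x>0$ (one may take $f(t)=\frac{F_X(t)-F_X(qt)}{t(1-q)}$); the $q$-moments are $m_q(n;X)=(1-q)\sum_{j\in\mathbb{Z}}q^{j(n+1)}f(q^j)$, $n\in\mathbb{N}_0$; $P_X$ is $q$-moment determinate if every $Y$ with $q$-density $g$ and $m_q(k;Y)=m_q(k;X)$ for all $k\in\mathbb{N}_0$ satisfies $g(q^j)=f(q^j)$ for all $j\in\mathbb{Z}$. The moments of $X$ are $\mu_n=\beta^{n/\gamma}\Gamma((n+\alpha)/\gamma)/\Gamma(\alpha/\gamma)$. *)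

From Stdlib Require Import Reals Arith ZArith.
Open Scope R_scope.

(* Euler's Gamma function, characterised (for s > 0) by Gauss' product formula
   Gamma(s) = lim_{n->oo} n! n^s / (s (s+1) ... (s+n)). *)
Definition is_Gamma (s g : R) : Prop :=
  Un_cv (fun n => INR (Factorial.fact n) * Rpower (INR n) s / prod_f_R0 (fun k => s + INR k) n) g.

(* hyper-exponential (generalized gamma) density, G standing for Gamma(alpha/gamma) *)
Definition hyperexp_density (alpha beta gamma G t : R) : R :=
  gamma * Rpower beta (- (alpha / gamma)) / G * Rpower t (alpha - 1)
    * exp (- Rpower t gamma / beta).

(* F is the distribution function x |-> int_0^x rho(t) dt on (0,oo) of a
   nonnegative random variable with density rho (continuous on (0,oo)):
   F' = rho on (0,oo) and F(0+) = 0. *)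
Definition is_cdf_of_density (rho F : R -> R) : Prop :=
  (forall x, 0 < x -> derivable_pt_lim F x (rho x)) /\
  (forall eps, 0 < eps -> exists d, 0 < d /\ forall x, 0 < x < d -> Rabs (F x) < eps).

Definition is_cdf_nonneg (F : R -> R) : Prop :=
  (forall x y, x <= y -> F x <= F y) /\
  (forall x, x < 0 -> F x = 0) /\
  (forall x eps, 0 < eps -> exists d, 0 < d /\ forall y, x <= y < x + d -> Rabs (F y - F x) < eps) /\
  (forall eps, 0 < eps -> exists M, forall x, M <= x -> Rabs (F x - 1) < eps).

Definition is_q_density (q : R) (F f : R -> R) : Prop :=
  forall x, 0 < x ->
    exists s, infinite_sum (fun j => f (x * q ^ j) * q ^ j) s /\ F x = x * (1 - q) * s.

(* m is the n-th q-moment:  m = (1-q) sum_{j in Z} q^{j(n+1)} f(q^j),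
   the bilateral series being split into its j >= 0 and j < 0 parts,
   both required to converge. *)
Definition q_moment (q : R) (f : R -> R) (n : nat) (m : R) : Prop :=
  exists s1 s2,
    infinite_sum (fun j : nat => powerRZ q (Z.of_nat j * Z.of_nat (S n))
                                 * f (powerRZ q (Z.of_nat j))) s1 /\
    infinite_sum (fun j : nat => powerRZ q (- Z.of_nat (S j) * Z.of_nat (S n))
                                 * f (powerRZ q (- Z.of_nat (S j)))) s2 /\
    m = (1 - q) * (s1 + s2).

Definition q_moment_determinate (q : R) (F : R -> R) : Prop :=
  forall f, is_q_density q F f ->
  forall (G g : R -> R), is_cdf_nonneg G -> is_q_density q G g ->
    (forall k : nat, exists m, q_moment q f k m /\ q_moment q g k m) ->
    forall j : Z, g (powerRZ q j) = f (powerRZ q j).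

From Stdlib Require Import Reals Lra Lia.
From Coquelicot Require Import Coquelicot.
Open Scope R_scope.

(* Let P(j) = F(q^j) - F(q^(j+1)) = q^j (1-q) f(q^j) be the mass of ]q^(j+1), q^j];
   the n-th q-moment is the bilateral sum m_n = sum_(j in Z) q^(j n) P(j).  If two
   laws share all q-moments, d = P - P' has sum_j q^(j n) d(j) = 0 for all n, hence
   also sum_j q^(j n) d(j) H_N(q^j) = 0 for the q-Pochhammer polynomial
   H_N(x) = (1 - q x)...(1 - q^N x).  H_N kills j = -1, ..., -N and H_N(1) is
   bounded below, so |d(0)| = O(K_1 q^N + K_(2N+3) q^(N(N+1)/2)) whenever
   |d(j)| q^(j n) <= K_n; the Gaussian factor beats the growth exp(O(n log n)) of
   the hyper-exponential q-moments, so d(0) = 0, and translating j gives d = 0.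
   The file proves, in order: facts on limits and series, bilateral series,
   point masses and q-moments, the q-Pochhammer polynomial, the vanishing
   criterion, the determinacy criterion under slow moment growth, the moment
   bounds of the hyper-exponential law, and the theorem. *)

Lemma Un_cv_le_eventually (u : nat -> R) l B N0 :
  Un_cv u l -> (forall N, (N0 <= N)%nat -> u N <= B) -> l <= B.
Proof.
  intros Hu HB. destruct (Rle_dec l B) as [h|h]; [exact h|]. exfalso.
  destruct (Hu (l - B)) as [N HN]; [lra|].
  specialize (HN (max N N0) (Nat.le_max_l _ _)).
  specialize (HB (max N N0) (Nat.le_max_r _ _)).
  unfold R_dist in HN. apply Rabs_def2 in HN. lra.
Qed.

Lemma Un_cv_ge_eventually (u : nat -> R) l B N0 :
  Un_cv u l -> (forall N, (N0 <= N)%nat -> B <= u N) -> B <= l.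
Proof.
  intros Hu HB. apply Ropp_le_cancel.
  apply (Un_cv_le_eventually (fun n => - u n) _ _ N0).
  - intros eps Heps. destruct (Hu eps Heps) as [N HN]. exists N. intros n Hn.
    unfold R_dist. replace (- u n - - l) with (- (u n - l)) by ring.
    rewrite Rabs_Ropp. exact (HN n Hn).
  - intros N HN. specialize (HB N HN). lra.
Qed.

Lemma Un_cv_squeeze0 (u v : nat -> R) :
  (forall N, 0 <= u N <= v N) -> Un_cv v 0 -> Un_cv u 0.
Proof.
  intros Huv Hv eps Heps. destruct (Hv eps Heps) as [N HN]. exists N. intros n Hn.
  specialize (HN n Hn). specialize (Huv n). unfold R_dist in *.
  rewrite Rminus_0_r in *. rewrite Rabs_right in * by lra. lra.
Qed.

Lemma Un_cv_scal0 (u : nat -> R) c : Un_cv u 0 -> Un_cv (fun n => c * u n) 0.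
Proof.
  intro Hu. replace 0 with (c * 0) by ring.
  apply (CV_mult (fun _ => c)); [|exact Hu].
  intros eps Heps. exists O. intros n _. unfold R_dist. rewrite Rminus_eq_0, Rabs_R0. lra.
Qed.

Lemma Un_cv_pow_succ x : 0 <= x < 1 -> Un_cv (fun n => x ^ S n) 0.
Proof.
  intros Hx eps Heps. destruct (pow_lt_1_zero x ltac:(rewrite Rabs_right; lra) eps Heps) as [N HN].
  exists N. intros n Hn. unfold R_dist. rewrite Rminus_0_r. apply HN. lia.
Qed.

Lemma series_abs_le_geometric (a : nat -> R) s r B :
  is_series a s -> 0 <= r < 1 -> 0 <= B ->
  (forall k, Rabs (a k) <= B * r ^ k) -> Rabs s <= B / (1 - r).
Proof.
  intros Hs Hr HB Ha. apply is_series_Reals in Hs.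
  assert (Hpartial : forall J, Rabs (sum_f_R0 a J) <= B / (1 - r)).
  { intro J. eapply Rle_trans; [apply sum_f_R0_triangle|].
    eapply Rle_trans; [apply (sum_Rle _ (fun k => B * r ^ k)); intros; apply Ha|].
    replace (sum_f_R0 (fun k => B * r ^ k) J) with (B * sum_f_R0 (fun k => r ^ k) J)
      by (clear; induction J; simpl; [ring | rewrite <- IHJ; ring]).
    rewrite tech3 by lra.
    assert (0 <= r ^ S J) by (apply pow_le; lra).
    assert (0 < / (1 - r)) by (apply Rinv_0_lt_compat; lra).
    unfold Rdiv. rewrite <- Rmult_assoc.
    apply Rmult_le_compat_r; [lra|]. nra. }
  apply Rabs_le. split.
  - apply (Un_cv_ge_eventually _ _ _ 0 Hs). intros N _.
    specialize (Hpartial N). unfold Rabs in Hpartial; destruct Rcase_abs in Hpartial; lra.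
  - apply (Un_cv_le_eventually _ _ _ 0 Hs). intros N _.
    specialize (Hpartial N). unfold Rabs in Hpartial; destruct Rcase_abs in Hpartial; lra.
Qed.

Lemma series_nonneg_term_le (a : nat -> R) s :
  is_series a s -> (forall k, 0 <= a k) -> (forall k, a k <= s) /\ 0 <= s.
Proof.
  intros Hs Ha. apply is_series_Reals in Hs.
  assert (Hmono : forall k N, (k <= N)%nat -> a k <= sum_f_R0 a N).
  { intros k N HkN. induction HkN.
    - destruct k; simpl; [lra|].
      assert (0 <= sum_f_R0 a k) by (apply cond_pos_sum; exact Ha).
      lra.
    - simpl. specialize (Ha (S m)). lra. }
  split.
  - intro k. apply (Un_cv_ge_eventually _ _ _ k Hs). exact (Hmono k).
  - apply (Un_cv_ge_eventually _ _ _ 0 Hs). intros N _. apply cond_pos_sum. exact Ha.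
Qed.

Lemma series_le_of_partial_sums (a : nat -> R) s B :
  is_series a s -> (forall J, sum_f_R0 a J <= B) -> s <= B.
Proof.
  intros Hs HB. apply is_series_Reals in Hs.
  apply (Un_cv_le_eventually _ _ _ 0 Hs). intros; auto.
Qed.

Definition zseries (a : Z -> R) (s : R) : Prop :=
  exists s1 s2 : R, is_series (fun k : nat => a (Z.of_nat k)) s1 /\
    is_series (fun k : nat => a (- Z.of_nat (S k))%Z) s2 /\ s = s1 + s2.

Lemma zseries_ext a b s : (forall j, a j = b j) -> zseries a s -> zseries b s.
Proof.
  intros Hab (s1 & s2 & H1 & H2 & ->). exists s1, s2.
  split; [|split]; [| |reflexivity]; (eapply is_series_ext; [|eassumption]); intro; apply Hab.
Qed.

Lemma zseries_scal a s c : zseries a s -> zseries (fun j => c * a j) (c * s).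
Proof.
  intros (s1 & s2 & H1 & H2 & ->). exists (c * s1), (c * s2).
  split; [|split]; [apply (is_series_scal c _ _ H1) | apply (is_series_scal c _ _ H2) | ring].
Qed.

Lemma zseries_sub_scal a b s u c :
  zseries a s -> zseries b u -> zseries (fun j => a j - c * b j) (s - c * u).
Proof.
  intros (s1 & s2 & H1 & H2 & ->) (u1 & u2 & K1 & K2 & ->).
  exists (s1 - c * u1), (s2 - c * u2). split; [|split].
  - exact (is_series_minus _ _ _ _ H1 (is_series_scal c _ _ K1)).
  - exact (is_series_minus _ _ _ _ H2 (is_series_scal c _ _ K2)).
  - ring.
Qed.

(* Restating the value of a series, to absorb the bookkeeping of index shifts. *)
Lemma is_series_eq_sum (a : nat -> R) l l' : is_series a l -> l = l' -> is_series a l'.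
Proof. intros H <-. exact H. Qed.

(* Moving one term between the two halves: the sum is invariant under j -> j + 1
   and under j -> j - 1, hence under every translation of the index. *)
Lemma zseries_succ a s : zseries a s -> zseries (fun j => a (j + 1)%Z) s.
Proof.
  intros (s1 & s2 & H1 & H2 & ->). exists (s1 - a 0%Z), (s2 + a 0%Z). split; [|split].
  - apply (is_series_ext (fun k => a (Z.of_nat (S k)))); [intro n; cbv beta; f_equal; lia|].
    apply (is_series_incr_1 (fun k => a (Z.of_nat k))).
    apply (is_series_eq_sum _ _ _ H1). unfold plus; simpl. ring.
  - apply (is_series_ext (fun k => a (- Z.of_nat k)%Z)); [intro n; cbv beta; f_equal; lia|].
    apply (is_series_decr_1 (fun k : nat => a (- Z.of_nat k)%Z)).
    apply (is_series_eq_sum _ _ _ H2). unfold plus, opp; simpl. ring.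
  - ring.
Qed.

Lemma zseries_pred a s : zseries a s -> zseries (fun j => a (j - 1)%Z) s.
Proof.
  intros (s1 & s2 & H1 & H2 & ->). exists (s1 + a (-1)%Z), (s2 - a (-1)%Z). split; [|split].
  - apply (is_series_decr_1 (fun k : nat => a (Z.of_nat k - 1)%Z)).
    apply (is_series_eq_sum _ s1); [|unfold plus, opp; simpl; ring].
    eapply is_series_ext; [|exact H1]. intro n; cbv beta; f_equal; lia.
  - apply (is_series_ext (fun k => a (- Z.of_nat (S (S k)))%Z));
      [intro n; cbv beta; f_equal; lia|].
    apply (is_series_incr_1 (fun k => a (- Z.of_nat (S k))%Z)).
    apply (is_series_eq_sum _ _ _ H2). unfold plus; simpl. ring.
  - ring.
Qed.

Lemma zseries_shift a s t : zseries a s -> zseries (fun j => a (j + t)%Z) s.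
Proof.
  intro Ha. induction t as [|t IH|t IH] using Z.peano_ind.
  - eapply zseries_ext; [|exact Ha]. intro j; cbv beta; f_equal; lia.
  - eapply zseries_ext; [|exact (zseries_succ _ _ IH)]. intro j; cbv beta; f_equal; lia.
  - eapply zseries_ext; [|exact (zseries_pred _ _ IH)]. intro j; cbv beta; f_equal; lia.
Qed.

Lemma zseries_nonneg_term_le a s : zseries a s -> (forall j, 0 <= a j) -> forall j, a j <= s.
Proof.
  intros (s1 & s2 & H1 & H2 & ->) Ha j.
  destruct (series_nonneg_term_le _ _ H1 (fun k => Ha _)) as [T1 P1].
  destruct (series_nonneg_term_le _ _ H2 (fun k => Ha _)) as [T2 P2].
  destruct (Z.le_gt_cases 0 j).
  - specialize (T1 (Z.to_nat j)). replace (Z.of_nat (Z.to_nat j)) with j in T1 by lia. lra.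
  - specialize (T2 (Z.to_nat (- j) - 1)%nat).
    replace (- Z.of_nat (S (Z.to_nat (- j) - 1)))%Z with j in T2 by lia. lra.
Qed.

Lemma powerRZ_mul_nat q z n : 0 < q -> powerRZ q (z * Z.of_nat n) = powerRZ q z ^ n.
Proof.
  intro Hq. induction n as [|n IH].
  - simpl. replace (z * 0)%Z with 0%Z by lia. reflexivity.
  - replace (z * Z.of_nat (S n))%Z with (z * Z.of_nat n + z)%Z by lia.
    rewrite powerRZ_add, IH by lra. simpl. ring.
Qed.

Lemma powerRZ_succ q j : 0 < q -> powerRZ q (j + 1) = q * powerRZ q j.
Proof. intro Hq. rewrite powerRZ_add by lra. simpl. ring. Qed.

Definition point_mass (q : R) (F : R -> R) (j : Z) : R :=
  F (powerRZ q j) - F (powerRZ q (j + 1)).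

Lemma point_mass_nonneg q F j : 0 < q < 1 ->
  (forall x y, 0 < x -> x <= y -> F x <= F y) -> 0 <= point_mass q F j.
Proof.
  intros Hq Hmono. unfold point_mass. rewrite powerRZ_succ by lra.
  pose proof (powerRZ_lt q j ltac:(lra)).
  pose proof (Hmono (q * powerRZ q j) (powerRZ q j) ltac:(nra) ltac:(nra)). lra.
Qed.

Lemma q_density_mass q F f : 0 < q < 1 -> is_q_density q F f ->
  forall x, 0 < x -> F x - F (q * x) = x * (1 - q) * f x.
Proof.
  intros Hq Hd x Hx.
  destruct (Hd x Hx) as (s & Hs & Es).
  destruct (Hd (q * x)) as (s' & Hs' & Es'); [nra|].
  apply is_series_Reals in Hs, Hs'.
  assert (Hsplit : is_series (fun j => f (x * q ^ j) * q ^ j) (q * s' + f x)).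
  { apply is_series_decr_1. apply (is_series_eq_sum _ (q * s')).
    - eapply is_series_ext; [|exact (is_series_scal q _ _ Hs')]. intro n. simpl.
      unfold scal; simpl; unfold mult; simpl.
      replace (q * x * q ^ n) with (x * (q * q ^ n)) by ring. ring.
    - unfold plus, opp; simpl. rewrite !Rmult_1_r. ring. }
  assert (Hs_eq : s = q * s' + f x).
  { rewrite <- (is_series_unique _ _ Hs). exact (is_series_unique _ _ Hsplit). }
  rewrite Es, Es', Hs_eq. ring.
Qed.

Lemma point_mass_q_density q F f j : 0 < q < 1 -> is_q_density q F f ->
  point_mass q F j = powerRZ q j * (1 - q) * f (powerRZ q j).
Proof.
  intros Hq Hf. unfold point_mass. rewrite powerRZ_succ by lra.
  apply (q_density_mass q F f Hq Hf), powerRZ_lt. lra.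
Qed.

Lemma q_moment_zseries q F u n m : 0 < q < 1 -> is_q_density q F u ->
  q_moment q u n m -> zseries (fun j => powerRZ q (j * Z.of_nat n) * point_mass q F j) m.
Proof.
  intros Hq Hu (s1 & s2 & H1 & H2 & Em).
  pose proof (fun j => point_mass_q_density q F u j Hq Hu) as HP.
  apply is_series_Reals in H1, H2.
  exists ((1 - q) * s1), ((1 - q) * s2). split; [|split].
  - eapply is_series_ext; [|exact (is_series_scal (1 - q) _ _ H1)]. intro k.
    rewrite HP.
    replace (Z.of_nat k * Z.of_nat (S n))%Z with (Z.of_nat k * Z.of_nat n + Z.of_nat k)%Z by lia.
    rewrite powerRZ_add by lra. unfold scal; simpl; unfold mult; simpl. ring.
  - eapply is_series_ext; [|exact (is_series_scal (1 - q) _ _ H2)]. intro k.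
    rewrite HP.
    replace (- Z.of_nat (S k) * Z.of_nat (S n))%Z
      with (- Z.of_nat (S k) * Z.of_nat n + - Z.of_nat (S k))%Z by lia.
    rewrite powerRZ_add by lra. unfold scal; simpl; unfold mult; simpl. ring.
  - rewrite Em. ring.
Qed.

Lemma exp_le_compat x y : x <= y -> exp x <= exp y.
Proof. intros [h|h]; [left; apply exp_increasing; exact h | rewrite h; lra]. Qed.

Lemma pow_unit_interval x n : 0 <= x <= 1 -> 0 <= x ^ n <= 1.
Proof. intro. induction n; simpl; nra. Qed.

Lemma pow_decreasing x m n : 0 <= x <= 1 -> (m <= n)%nat -> x ^ n <= x ^ m.
Proof.
  intros Hx Hmn. replace n with (m + (n - m))%nat by lia. rewrite pow_add.
  pose proof (pow_unit_interval x m Hx). pose proof (pow_unit_interval x (n - m) Hx). nra.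
Qed.

Fixpoint triangular (N : nat) : nat :=
  match N with O => O | S N' => (triangular N' + S N')%nat end.

Lemma INR_triangular N : INR (triangular N) = INR N * (INR N + 1) / 2.
Proof.
  induction N as [|N IH]; [simpl; lra|].
  simpl triangular. rewrite plus_INR, IH, S_INR. field.
Qed.

Section QPochhammer.
Variable q : R.
Hypothesis Hq : 0 < q < 1.

Fixpoint qpoch (N : nat) (x : R) : R :=
  match N with O => 1 | S N' => qpoch N' x * (1 - q ^ (S N') * x) end.

Lemma qpoch_unit_interval N x : 0 <= x <= 1 -> 0 <= qpoch N x <= 1.
Proof.
  intro Hx. induction N as [|N IH]; simpl; [lra|].
  pose proof (pow_unit_interval q (S N) ltac:(lra)).
  assert (0 <= q ^ S N * x <= 1) by nra. simpl in *. nra.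
Qed.

Lemma qpoch_root N x i : (1 <= i <= N)%nat -> q ^ i * x = 1 -> qpoch N x = 0.
Proof.
  intros Hi Ex. induction N as [|N IH]; [lia|]. simpl qpoch.
  destruct (Nat.eq_dec i (S N)) as [->|ne].
  - simpl in Ex. rewrite Ex. ring.
  - rewrite IH by lia. ring.
Qed.

Lemma qpoch_large N x : 1 <= q ^ N * x -> Rabs (qpoch N x) <= q ^ (triangular N) * x ^ N.
Proof.
  induction N as [|N IH]; intro Hx; simpl; [rewrite Rabs_R1; lra|].
  assert (HqN : 0 < q ^ N) by (apply pow_lt; lra).
  assert (HqqN : 0 < q * q ^ N) by (apply Rmult_lt_0_compat; lra).
  assert (Hx0 : 0 < x) by (simpl in Hx; nra).
  assert (Hprev : 1 <= q ^ N * x).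
  { assert (0 < q ^ N * x) by (apply Rmult_lt_0_compat; lra). simpl in Hx. nra. }
  specialize (IH Hprev). rewrite Rabs_mult, pow_add.
  assert (Hfactor : Rabs (1 - q * q ^ N * x) <= q * q ^ N * x)
    by (simpl in Hx; rewrite Rabs_left1 by lra; lra).
  apply Rle_trans with (q ^ triangular N * x ^ N * (q * q ^ N * x)).
  - apply Rmult_le_compat; auto; apply Rabs_pos.
  - simpl. right. ring.
Qed.

(* 1 - x >= exp(-x/(1-q)) on [0, q]: controls the product qpoch N 1. *)
Lemma exp_le_one_minus x : 0 <= x <= q -> exp (- (x / (1 - q))) <= 1 - x.
Proof.
  intro Hx. rewrite exp_Ropp. pose proof (exp_ineq1_le (x / (1 - q))) as Hexp.
  assert (Hy : 0 <= x / (1 - q)) by (apply Rdiv_le_0_compat; lra).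
  assert (Hprod : 1 <= (1 - x) * (1 + x / (1 - q))).
  { replace ((1 - x) * (1 + x / (1 - q))) with (1 + x * (q - x) / (1 - q)) by (field; lra).
    assert (0 <= x * (q - x) / (1 - q)) by (apply Rdiv_le_0_compat; nra). lra. }
  apply Rle_trans with (/ (1 + x / (1 - q))).
  - apply Rinv_le_contravar; lra.
  - apply (Rmult_le_reg_r (1 + x / (1 - q))); [lra|]. rewrite Rinv_l by lra. lra.
Qed.

Definition qpoch_one_lower := exp (- (q / ((1 - q) * (1 - q)))).

Lemma qpoch_one_lower_pos : 0 < qpoch_one_lower.
Proof. apply exp_pos. Qed.

Lemma qpoch_one_ge N : qpoch_one_lower <= qpoch N 1.
Proof.
  assert (Hpartial : forall N, exp (- ((q - q ^ (S N)) / ((1 - q) * (1 - q)))) <= qpoch N 1).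
  { clear N. induction N as [|N IH]; simpl qpoch.
    - replace (- ((q - q ^ 1) / ((1 - q) * (1 - q)))) with 0 by (simpl; field; lra).
      rewrite exp_0. lra.
    - assert (HqS : 0 <= q ^ S N <= q).
      { split; [apply pow_le; lra|].
        pose proof (pow_decreasing q 1 (S N) ltac:(lra) ltac:(lia)). simpl in *. lra. }
      replace (- ((q - q ^ S (S N)) / ((1 - q) * (1 - q)))) with
        (- ((q - q ^ (S N)) / ((1 - q) * (1 - q))) + - (q ^ S N / (1 - q)))
        by (simpl; field; lra).
      rewrite exp_plus, Rmult_1_r.
      apply Rmult_le_compat; try (left; apply exp_pos); auto.
      apply exp_le_one_minus; exact HqS. }
  apply Rle_trans with (2 := Hpartial N). apply exp_le_compat, Ropp_le_contravar.
  assert (0 < q ^ S N) by (apply pow_lt; lra).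
  apply Rmult_le_compat_r; [apply Rlt_le, Rinv_0_lt_compat; nra | lra].
Qed.

End QPochhammer.

Section Vanishing.
Variable q : R.
Hypothesis Hq : 0 < q < 1.
Variable e : Z -> R.
Variable K : nat -> R.
Hypothesis HK : forall n j, Rabs (e j) * powerRZ q (j * Z.of_nat n) <= K n.
Hypothesis HZ : forall n, zseries (fun j => powerRZ q (j * Z.of_nat n) * e j) 0.

(* The bounds K n are nonnegative (look at j = 0). *)
Lemma moment_bound_nonneg n : 0 <= K n.
Proof.
  eapply Rle_trans; [|apply (HK n 0%Z)]. simpl. rewrite Rmult_1_r. apply Rabs_pos.
Qed.

(* The moments vanish against every polynomial, in particular against qpoch N. *)
Lemma zseries_qpoch N n :
  zseries (fun j => powerRZ q (j * Z.of_nat n) * e j * qpoch q N (powerRZ q j)) 0.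
Proof.
  revert n. induction N as [|N IH]; intro n.
  - eapply zseries_ext; [|exact (HZ n)]. intro j. simpl. ring.
  - pose proof (zseries_sub_scal _ _ _ _ (q ^ S N) (IH n) (IH (S n))) as Hcomb.
    replace (0 - q ^ S N * 0) with 0 in Hcomb by ring.
    eapply zseries_ext; [|exact Hcomb]. intro j. cbv beta.
    replace (j * Z.of_nat (S n))%Z with (j * Z.of_nat n + j)%Z by lia.
    rewrite powerRZ_add by lra.
    change (qpoch q (S N) (powerRZ q j))
      with (qpoch q N (powerRZ q j) * (1 - q ^ S N * powerRZ q j)).
    ring.
Qed.

Let term N n j := powerRZ q (j * Z.of_nat n) * e j * qpoch q N (powerRZ q j).

(* For j >= 1 the terms decay geometrically thanks to the extra power q^(j n1). *)
Lemma term_pos_bound N n1 k :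
  Rabs (term N (S n1) (Z.of_nat (S k))) <= K 1 * q ^ n1 * (q ^ n1) ^ k.
Proof.
  unfold term. rewrite <- !pow_powerRZ. rewrite powerRZ_mul_nat, <- pow_powerRZ by lra.
  pose proof (HK 1 (Z.of_nat (S k))) as HK1.
  rewrite powerRZ_mul_nat, <- pow_powerRZ, pow_1 in HK1 by lra.
  assert (Hqk : 0 <= q ^ S k <= 1) by (apply pow_unit_interval; lra).
  pose proof (qpoch_unit_interval q Hq N (q ^ S k) Hqk) as Hpoch.
  assert (Hsplit : (q ^ S k) ^ S n1 = q ^ S k * (q ^ n1 * (q ^ n1) ^ k)).
  { rewrite <- !pow_mult, <- !pow_add. f_equal. lia. }
  assert (0 <= q ^ n1 * (q ^ n1) ^ k)
    by (apply Rmult_le_pos; apply pow_le; [lra | apply pow_le; lra]).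
  rewrite !Rabs_mult, Hsplit, (Rabs_right (qpoch _ _ _)), Rabs_right by
    (apply Rle_ge; try apply Rmult_le_pos; lra).
  pose proof (Rabs_pos (e (Z.of_nat (S k)))).
  apply Rle_trans with (Rabs (e (Z.of_nat (S k))) * q ^ S k * (q ^ n1 * (q ^ n1) ^ k)).
  - replace (q ^ S k * (q ^ n1 * (q ^ n1) ^ k) * Rabs (e (Z.of_nat (S k))) * qpoch q N (q ^ S k))
      with (Rabs (e (Z.of_nat (S k))) * q ^ S k * (q ^ n1 * (q ^ n1) ^ k) * qpoch q N (q ^ S k))
      by ring.
    assert (0 <= Rabs (e (Z.of_nat (S k))) * q ^ S k * (q ^ n1 * (q ^ n1) ^ k))
      by (apply Rmult_le_pos; [apply Rmult_le_pos|]; lra).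
    nra.
  - replace (K 1 * q ^ n1 * (q ^ n1) ^ k) with (K 1 * (q ^ n1 * (q ^ n1) ^ k)) by ring.
    apply Rmult_le_compat_r; lra.
Qed.

(* For j <= -1 the terms vanish down to j = -N (roots of qpoch N) and beyond are
   controlled by the moment of order n + N + 1 and the Gaussian factor q^(tri N). *)
Lemma term_neg_bound N n k :
  Rabs (term N n (- Z.of_nat (S k))) <= K (n + N + 1) * q ^ (triangular N) * q ^ S k.
Proof.
  unfold term. set (x := powerRZ q (- Z.of_nat (S k))).
  assert (Hqk : 0 < q ^ S k) by (apply pow_lt; lra).
  assert (Hx1 : q ^ S k * x = 1).
  { unfold x. rewrite powerRZ_neg', <- pow_powerRZ. field. lra. }
  assert (Hx : 0 < x) by (apply powerRZ_lt; lra).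
  pose proof (moment_bound_nonneg (n + N + 1)) as HKp.
  pose proof (pow_le q (triangular N) ltac:(lra)) as Htri.
  destruct (Nat.lt_ge_cases k N) as [hk|hk].
  - rewrite (qpoch_root q N x (S k)) by (auto; lia). rewrite Rmult_0_r, Rabs_R0.
    apply Rmult_le_pos; [apply Rmult_le_pos|]; lra.
  - assert (Hbig : 1 <= q ^ N * x).
    { pose proof (pow_decreasing q N (S k) ltac:(lra) ltac:(lia)). nra. }
    pose proof (qpoch_large q Hq N x Hbig) as Hpoch.
    rewrite !Rabs_mult, (Rabs_right (powerRZ q _)) by (apply Rle_ge, powerRZ_le; lra).
    rewrite powerRZ_mul_nat by lra. fold x.
    pose proof (HK (n + N + 1) (- Z.of_nat (S k))%Z) as HKm.
    rewrite powerRZ_mul_nat in HKm by lra. fold x in HKm.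
    assert (Hpow : x ^ n * x ^ N = x ^ (n + N + 1) * q ^ S k).
    { rewrite <- pow_add, (pow_add x (n + N) 1), pow_1.
      replace (x ^ (n + N) * x * q ^ S k) with (x ^ (n + N) * (q ^ S k * x)) by ring.
      rewrite Hx1. ring. }
    pose proof (Rabs_pos (e (- Z.of_nat (S k)))%Z).
    assert (0 <= x ^ n) by (apply pow_le; lra).
    apply Rle_trans with (x ^ n * Rabs (e (- Z.of_nat (S k))%Z) * (q ^ triangular N * x ^ N)).
    + apply Rmult_le_compat_l; [apply Rmult_le_pos; lra | exact Hpoch].
    + replace (x ^ n * Rabs (e (- Z.of_nat (S k))%Z) * (q ^ triangular N * x ^ N))
        with (Rabs (e (- Z.of_nat (S k))%Z) * x ^ (n + N + 1) * (q ^ triangular N * q ^ S k))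
        by (transitivity (Rabs (e (- Z.of_nat (S k))%Z) * q ^ triangular N
                          * (x ^ (n + N + 1) * q ^ S k)); [| rewrite <- Hpow]; ring).
      rewrite (Rmult_assoc (K _)). apply Rmult_le_compat_r; [apply Rmult_le_pos; lra | exact HKm].
Qed.

(* Isolating the term j = 0 of the vanishing series sum_j q^(j n) e j qpoch N (q^j). *)
Lemma central_term_bound N n1 : (1 <= n1)%nat ->
  qpoch_one_lower q * Rabs (e 0%Z)
    <= K 1 * q ^ n1 / (1 - q) + K (S n1 + N + 1) * q ^ (triangular N) * q / (1 - q).
Proof.
  intro Hn1. destruct (zseries_qpoch N (S n1)) as (s1 & s2 & H1 & H2 & Hsum).
  fold (term N (S n1)) in H1, H2.
  assert (Hr : 0 < q ^ n1 <= q).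
  { split; [apply pow_lt; lra|].
    pose proof (pow_decreasing q 1 n1 ltac:(lra) Hn1). simpl in *. lra. }
  assert (Hpos : Rabs (s1 - term N (S n1) 0%Z) <= K 1 * q ^ n1 / (1 - q ^ n1)).
  { apply (series_abs_le_geometric (fun k => term N (S n1) (Z.of_nat (S k)))).
    - apply (is_series_incr_1 (fun k => term N (S n1) (Z.of_nat k))).
      apply (is_series_eq_sum _ _ _ H1). unfold plus; simpl. ring.
    - lra.
    - pose proof (moment_bound_nonneg 1). nra.
    - intro k. apply term_pos_bound. }
  assert (Hneg : Rabs s2 <= K (S n1 + N + 1) * q ^ (triangular N) * q / (1 - q)).
  { apply (series_abs_le_geometric _ _ q _ H2); [lra| |].
    - pose proof (moment_bound_nonneg (S n1 + N + 1)).
      pose proof (pow_le q (triangular N) ltac:(lra)).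
      repeat apply Rmult_le_pos; lra.
    - intro k.
      replace (K (S n1 + N + 1) * q ^ triangular N * q * q ^ k)
        with (K (S n1 + N + 1) * q ^ triangular N * q ^ S k) by (simpl; ring).
      apply (term_neg_bound N (S n1) k). }
  assert (Hcentral : qpoch_one_lower q * Rabs (e 0%Z) <= Rabs (term N (S n1) 0%Z)).
  { unfold term. simpl. rewrite Rmult_1_l, Rabs_mult.
    pose proof (qpoch_one_ge q Hq N). pose proof (qpoch_one_lower_pos q).
    rewrite (Rabs_right (qpoch q N 1)) by lra.
    rewrite Rmult_comm. apply Rmult_le_compat_l; [apply Rabs_pos | lra]. }
  assert (Htri : Rabs (term N (S n1) 0%Z) <= Rabs (s1 - term N (S n1) 0%Z) + Rabs s2).
  { replace (term N (S n1) 0%Z) with (- (s1 - term N (S n1) 0%Z) + - s2) at 1 by lra.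
    rewrite <- (Rabs_Ropp (s1 - _)), <- (Rabs_Ropp s2). apply Rabs_triang. }
  assert (Hgeom : K 1 * q ^ n1 / (1 - q ^ n1) <= K 1 * q ^ n1 / (1 - q)).
  { apply Rmult_le_compat_l; [pose proof (moment_bound_nonneg 1); nra|].
    apply Rinv_le_contravar; lra. }
  lra.
Qed.

(* Letting N -> oo with n1 = N + 1 in central_term_bound. *)
Lemma vanishing_criterion :
  Un_cv (fun N => K (2 * N + 3) * q ^ (triangular N)) 0 -> e 0%Z = 0.
Proof.
  intro Hgrowth.
  set (u := fun N => K 1 / (1 - q) * q ^ S N
                     + q / (1 - q) * (K (2 * N + 3) * q ^ (triangular N))).
  assert (Hu : Un_cv u 0).
  { replace 0 with (0 + 0) by ring. apply CV_plus.
    - apply Un_cv_scal0, Un_cv_pow_succ. lra.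
    - apply Un_cv_scal0. exact Hgrowth. }
  assert (Hle : qpoch_one_lower q * Rabs (e 0%Z) <= 0).
  { apply (Un_cv_ge_eventually _ _ _ 0 Hu). intros N _.
    unfold u. replace (2 * N + 3)%nat with (S (S N) + N + 1)%nat by lia.
    pose proof (central_term_bound N (S N) ltac:(lia)).
    unfold Rdiv in *. lra. }
  pose proof (qpoch_one_lower_pos q). pose proof (Rabs_pos (e 0%Z)).
  apply Rabs_eq_0. nra.
Qed.

End Vanishing.

(* The growth condition on moment bounds M n under which q-moments determine
   a law: D^(2N+3) M(2N+3) q^(tri N) -> 0 for every D > 0 (the factor D^n
   accounts for translating the index of the masses). *)
Definition slow_moment_growth (q : R) (M : nat -> R) : Prop :=
  forall D, 0 < D ->
    Un_cv (fun N => D ^ (2 * N + 3)%nat * M (2 * N + 3)%nat * q ^ (triangular N)) 0.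

Lemma mass_difference_moment q (P P' : Z -> R) n m M :
  0 < q < 1 -> (forall j, 0 <= P j) -> (forall j, 0 <= P' j) ->
  zseries (fun j => powerRZ q (j * Z.of_nat n) * P j) m ->
  zseries (fun j => powerRZ q (j * Z.of_nat n) * P' j) m -> m <= M ->
  zseries (fun j => powerRZ q (j * Z.of_nat n) * (P j - P' j)) 0 /\
  (forall j, Rabs (P j - P' j) * powerRZ q (j * Z.of_nat n) <= 2 * M).
Proof.
  intros Hq HP HP' Hm Hm' HmM.
  assert (Hpz : forall z, 0 < powerRZ q z) by (intro; apply powerRZ_lt; lra).
  split.
  - pose proof (zseries_sub_scal _ _ _ _ 1 Hm Hm') as Hdiff.
    replace (m - 1 * m) with 0 in Hdiff by ring.
    eapply zseries_ext; [|exact Hdiff]. intro j. cbv beta. ring.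
  - intro j. pose proof (Hpz (j * Z.of_nat n)%Z).
    assert (Hterm : forall Q, (forall i, 0 <= Q i) ->
              zseries (fun i => powerRZ q (i * Z.of_nat n) * Q i) m ->
              powerRZ q (j * Z.of_nat n) * Q j <= m).
    { intros Q HQ HQm. apply (zseries_nonneg_term_le _ _ HQm).
      intro i. apply Rmult_le_pos; [apply Rlt_le, Hpz | apply HQ]. }
    pose proof (Hterm P HP Hm). pose proof (Hterm P' HP' Hm').
    assert (Rabs (P j - P' j) <= P j + P' j).
    { pose proof (HP j). pose proof (HP' j). apply Rabs_le. lra. }
    nra.
Qed.

(* Two nonnegative mass sequences on the
   points q^j (j in Z) with the same bilateral q-moments coincide, provided the
   common moments are bounded by some M of slow growth: translate the index by
   t and apply the vanishing criterion to the difference. *)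
Lemma masses_determined q (P P' : Z -> R) (M : nat -> R) :
  0 < q < 1 -> (forall j, 0 <= P j) -> (forall j, 0 <= P' j) ->
  (forall n, exists m, zseries (fun j => powerRZ q (j * Z.of_nat n) * P j) m /\
                       zseries (fun j => powerRZ q (j * Z.of_nat n) * P' j) m /\ m <= M n) ->
  slow_moment_growth q M -> forall t, P t = P' t.
Proof.
  intros Hq HP HP' Hmom Hgrowth t.
  assert (Hdiff : forall n,
            zseries (fun j => powerRZ q (j * Z.of_nat n) * (P j - P' j)) 0 /\
            (forall j, Rabs (P j - P' j) * powerRZ q (j * Z.of_nat n) <= 2 * M n)).
  { intro n. destruct (Hmom n) as (m & Hm & Hm' & HmM).
    exact (mass_difference_moment q P P' n m (M n) Hq HP HP' Hm Hm' HmM). }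
  set (D := powerRZ q (- t)).
  assert (HD : 0 < D) by (apply powerRZ_lt; lra).
  assert (Hshift : forall n j, powerRZ q (j * Z.of_nat n)
                               = D ^ n * powerRZ q ((j + t) * Z.of_nat n)).
  { intros n j. unfold D. rewrite <- powerRZ_mul_nat, <- powerRZ_add by lra.
    f_equal. lia. }
  assert (Hvanish : P (0 + t)%Z - P' (0 + t)%Z = 0).
  { apply (vanishing_criterion q Hq (fun j => P (j + t)%Z - P' (j + t)%Z)
                               (fun n => D ^ n * (2 * M n))).
    - intros n j. rewrite (Hshift n j). pose proof (pow_lt D n HD).
      pose proof (proj2 (Hdiff n) (j + t)%Z). nra.
    - intro n. pose proof (zseries_scal _ _ (D ^ n) (zseries_shift _ _ t (proj1 (Hdiff n)))) as Hs.
      rewrite Rmult_0_r in Hs. eapply zseries_ext; [|exact Hs].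
      intro j. cbv beta. rewrite (Hshift n j). ring.
    - apply (Un_cv_ext (fun N => 2 * (D ^ (2 * N + 3) * M (2 * N + 3)%nat * q ^ triangular N))).
      + intro N. ring.
      + exact (Un_cv_scal0 _ 2 (Hgrowth D HD)). }
  replace (0 + t)%Z with t in Hvanish by lia. lra.
Qed.

Lemma q_moment_determinate_of_growth q F (M : nat -> R) : 0 < q < 1 ->
  (forall x y, 0 < x -> x <= y -> F x <= F y) ->
  (forall n m, zseries (fun j => powerRZ q (j * Z.of_nat n) * point_mass q F j) m ->
               m <= M n) ->
  slow_moment_growth q M -> q_moment_determinate q F.
Proof.
  intros Hq HF_mono HM Hgrowth f Hf G g HG Hg Hmom t.
  assert (HG_mono : forall x y, 0 < x -> x <= y -> G x <= G y)
    by (intros x y _; apply (proj1 HG)).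
  assert (Hmasses : forall j, point_mass q F j = point_mass q G j).
  { apply (masses_determined q _ _ M Hq);
      [intro j; apply point_mass_nonneg; auto .. | | exact Hgrowth].
    intro n. destruct (Hmom n) as (m & Hmf & Hmg).
    pose proof (q_moment_zseries q F f n m Hq Hf Hmf) as HmF.
    exists m. repeat split.
    - exact HmF.
    - exact (q_moment_zseries q G g n m Hq Hg Hmg).
    - exact (HM n m HmF). }
  specialize (Hmasses t).
  rewrite (point_mass_q_density q F f t Hq Hf), (point_mass_q_density q G g t Hq Hg) in Hmasses.
  pose proof (powerRZ_lt q t ltac:(lra)).
  apply (Rmult_eq_reg_l (powerRZ q t * (1 - q))); [lra | nra].
Qed.

Section DistributionFunction.
Variables (rho F : R -> R).
Hypothesis HF : is_cdf_of_density rho F.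
Hypothesis Hrho : forall t, 0 < t -> 0 <= rho t.

Lemma cdf_mean_value a b : 0 < a < b -> exists c, a < c < b /\ F b - F a = rho c * (b - a).
Proof.
  intro Hab. destruct HF as [Hderiv _].
  destruct (MVT_cor2 F rho a b) as (c & Hc & Hcab); [lra | |].
  - intros c Hc. apply Hderiv. lra.
  - exists c. auto.
Qed.

Lemma cdf_increasing a b : 0 < a -> a <= b -> F a <= F b.
Proof.
  intros Ha [Hab|<-]; [|lra].
  destruct (cdf_mean_value a b) as (c & Hc & Hmv); [lra|].
  specialize (Hrho c ltac:(lra)). nra.
Qed.

Lemma cdf_nonneg x : 0 < x -> 0 <= F x.
Proof.
  intro Hx. destruct (Rle_dec 0 (F x)) as [h|h]; [exact h|]. exfalso.
  destruct HF as [_ Hzero]. destruct (Hzero (- F x)) as (d & Hd & Hsmall); [lra|].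
  set (y := Rmin x (d / 2)).
  assert (Hy : 0 < y <= x) by (unfold y; split; [apply Rmin_pos | apply Rmin_l]; lra).
  assert (y < d) by (unfold y; pose proof (Rmin_r x (d / 2)); lra).
  specialize (Hsmall y ltac:(lra)). pose proof (cdf_increasing y x ltac:(lra) ltac:(lra)).
  apply Rabs_def2 in Hsmall. lra.
Qed.

End DistributionFunction.

Lemma is_Gamma_nonneg s g : 0 < s -> is_Gamma s g -> 0 <= g.
Proof.
  intros Hs Hg. apply (Un_cv_ge_eventually _ _ _ 0 Hg). intros N _.
  assert (Hprod : 0 < prod_f_R0 (fun k => s + INR k) N).
  { induction N as [|N IH]; [simpl; lra|].
    change (prod_f_R0 _ (S N)) with (prod_f_R0 (fun k => s + INR k) N * (s + INR (S N))).
    pose proof (pos_INR (S N)). apply Rmult_lt_0_compat; lra. }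
  apply Rmult_le_pos; [apply Rmult_le_pos; [apply pos_INR | apply Rlt_le, exp_pos]|].
  apply Rlt_le, Rinv_0_lt_compat. exact Hprod.
Qed.

Definition hyperexp_coef (alpha beta gamma G : R) : R :=
  gamma * Rpower beta (- (alpha / gamma)) / G.

Lemma hyperexp_coef_nonneg alpha beta gamma G :
  0 < alpha -> 0 < gamma -> is_Gamma (alpha / gamma) G -> 0 <= hyperexp_coef alpha beta gamma G.
Proof.
  intros Ha Hg HG. unfold hyperexp_coef, Rdiv.
  pose proof (is_Gamma_nonneg _ _ (Rdiv_lt_0_compat _ _ Ha Hg) HG) as HG0.
  apply Rmult_le_pos; [apply Rmult_le_pos; [lra | apply Rlt_le, exp_pos]|].
  destruct HG0 as [h | <-]; [apply Rlt_le, Rinv_0_lt_compat; exact h | rewrite Rinv_0; lra].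
Qed.

Lemma hyperexp_density_nonneg alpha beta gamma G t :
  0 <= hyperexp_coef alpha beta gamma G -> 0 <= hyperexp_density alpha beta gamma G t.
Proof.
  intro HA. apply Rmult_le_pos; [apply Rmult_le_pos; [exact HA | apply Rlt_le, exp_pos]|].
  apply Rlt_le, exp_pos.
Qed.

(* exp u >= (u/k)^k, from exp (u/k) >= 1 + u/k >= u/k. *)
Lemma exp_ge_pow_ratio u k : 0 <= u -> (1 <= k)%nat -> (u / INR k) ^ k <= exp u.
Proof.
  intros Hu Hk. assert (Hk0 : 0 < INR k) by (apply lt_0_INR; lia).
  replace (exp u) with (exp (u / INR k) ^ k).
  - apply pow_incr. split; [apply Rdiv_le_0_compat; lra|].
    pose proof (exp_ineq1_le (u / INR k)). lra.
  - rewrite <- Rpower_pow by apply exp_pos. unfold Rpower. rewrite ln_exp. f_equal. field. lra.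
Qed.

Lemma power_times_stretched_exp_le beta gamma c a k :
  0 < beta -> 0 < gamma -> 1 <= c -> (1 <= k)%nat -> a <= gamma * INR k ->
  Rpower c a * exp (- Rpower c gamma / beta) <= (INR k * beta) ^ k.
Proof.
  intros Hb Hg Hc Hk Ha.
  assert (Hk0 : 0 < INR k) by (apply lt_0_INR; lia).
  set (u := Rpower c gamma / beta).
  assert (Hu : 0 < u) by (apply Rdiv_lt_0_compat; [apply exp_pos | lra]).
  set (ck := Rpower c (gamma * INR k)).
  assert (Hck : 0 < ck) by apply exp_pos.
  assert (Hratio : (u / INR k) ^ k = ck / (INR k * beta) ^ k).
  { unfold u, ck. rewrite <- Rpower_mult, Rpower_pow by apply exp_pos.
    unfold Rdiv. rewrite !Rpow_mult_distr, pow_inv, pow_inv. field.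
    split; apply pow_nonzero; lra. }
  assert (Hkb : 0 < (INR k * beta) ^ k) by (apply pow_lt; nra).
  assert (Hexp : exp (- u) <= (INR k * beta) ^ k / ck).
  { rewrite exp_Ropp. pose proof (exp_ge_pow_ratio u k ltac:(lra) Hk) as Hge.
    rewrite Hratio in Hge. replace ((INR k * beta) ^ k / ck) with (/ (ck / (INR k * beta) ^ k))
      by (field; lra).
    apply Rinv_le_contravar; [apply Rdiv_lt_0_compat|]; lra. }
  assert (Hpow : Rpower c a <= ck) by (apply Rle_Rpower; lra).
  replace (- Rpower c gamma / beta) with (- u) by (unfold u; field; lra).
  apply Rle_trans with (ck * ((INR k * beta) ^ k / ck)).
  - apply Rmult_le_compat; [apply Rlt_le, exp_pos .. | exact Hpow | exact Hexp].
  - right. field. lra.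
Qed.

Lemma exists_nat_multiple_ge gamma a : 0 < gamma -> 0 < a ->
  exists kap : nat, (1 <= kap)%nat /\ a <= gamma * INR kap.
Proof.
  intros Hg Ha. destruct (INR_archimed gamma a Hg) as [kap Hkap].
  exists kap. split; [|lra].
  destruct kap; [simpl in Hkap; lra | lia].
Qed.

(* Bounds on the q-moments of the hyper-exponential law.  kap is a fixed
   integer with gamma kap >= 1 + alpha, so that x^(n+2) rho(x) is dominated by
   (p beta)^p with p = kap (n+1). *)
Section HyperexpMoments.
Variables alpha beta gamma G q : R.
Variable F : R -> R.
Variable kap : nat.
Hypotheses (Ha : 0 < alpha) (Hb : 0 < beta) (Hg : 0 < gamma) (Hq : 0 < q < 1).
Hypothesis HF : is_cdf_of_density (hyperexp_density alpha beta gamma G) F.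
Hypothesis HA : 0 <= hyperexp_coef alpha beta gamma G.
Hypothesis Hkap : (1 <= kap)%nat.
Hypothesis Hkap_gamma : 1 + alpha <= gamma * INR kap.

Let rho := hyperexp_density alpha beta gamma G.
Let A := hyperexp_coef alpha beta gamma G.

Lemma rho_nonneg t : 0 < t -> 0 <= rho t.
Proof. intros _. exact (hyperexp_density_nonneg alpha beta gamma G t HA). Qed.

(* The constant bounding the weighted tail of the masses in the n-th q-moment. *)
Definition moment_tail_const (n : nat) : R :=
  A * (/ q) ^ (n + 2) * (INR (kap * (n + 1)) * beta) ^ (kap * (n + 1)).

Lemma moment_tail_const_nonneg n : 0 <= moment_tail_const n.
Proof.
  unfold moment_tail_const. apply Rmult_le_pos; [apply Rmult_le_pos|]; [exact HA | |].
  - apply pow_le, Rlt_le, Rinv_0_lt_compat. lra.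
  - apply pow_le, Rmult_le_pos; [apply pos_INR | lra].
Qed.

Lemma power_times_density_le n c : 1 <= c ->
  c ^ (n + 2) * rho c <= A * (INR (kap * (n + 1)) * beta) ^ (kap * (n + 1)).
Proof.
  intro Hc. set (p := (kap * (n + 1))%nat).
  replace (c ^ (n + 2) * rho c)
    with (A * (Rpower c (INR (n + 2) + alpha - 1) * exp (- Rpower c gamma / beta))).
  - apply Rmult_le_compat_l; [exact HA|]. apply power_times_stretched_exp_le; try lra.
    + unfold p. nia.
    + unfold p. rewrite mult_INR, !plus_INR. simpl. pose proof (pos_INR n). nra.
  - unfold rho, hyperexp_density. fold (hyperexp_coef alpha beta gamma G). fold A.
    rewrite <- (Rpower_pow (n + 2) c) by lra.
    replace (INR (n + 2) + alpha - 1) with (INR (n + 2) + (alpha - 1)) by ring.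
    rewrite Rpower_plus. ring.
Qed.

Lemma weighted_mass_tail_le n k :
  powerRZ q (- Z.of_nat (S k) * Z.of_nat n) *
    (F (powerRZ q (- Z.of_nat (S k))) - F (powerRZ q (- Z.of_nat (S k) + 1)))
  <= moment_tail_const n * q ^ S k.
Proof.
  set (x := powerRZ q (- Z.of_nat (S k))).
  assert (Hqk : 0 < q ^ S k) by (apply pow_lt; lra).
  assert (Hx_inv : q ^ S k = / x)
    by (unfold x; rewrite powerRZ_neg', <- pow_powerRZ, Rinv_inv; reflexivity).
  assert (Hx : 0 < x) by (apply powerRZ_lt; lra).
  assert (Hqx : 1 <= q * x).
  { pose proof (pow_unit_interval q k ltac:(lra)). assert (0 < q ^ k) by (apply pow_lt; lra).
    replace (q * x) with (/ q ^ k)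
      by (unfold x; rewrite powerRZ_neg', <- pow_powerRZ; simpl; field; lra).
    apply (Rmult_le_reg_r (q ^ k)); [lra|]. rewrite Rinv_l by lra. lra. }
  rewrite powerRZ_succ, powerRZ_mul_nat by lra. fold x.
  destruct (cdf_mean_value rho F HF (q * x) x) as (c & Hc & Hmv); [nra|]. rewrite Hmv.
  pose proof (rho_nonneg c ltac:(lra)) as Hrc.
  assert (Hxc : x ^ (n + 2) <= (/ q) ^ (n + 2) * c ^ (n + 2)).
  { rewrite <- Rpow_mult_distr. apply pow_incr. split; [lra|].
    apply (Rmult_le_reg_l q); [lra|]. rewrite <- Rmult_assoc, Rinv_r by lra. lra. }
  assert (Hbound : x ^ (n + 2) * rho c <= moment_tail_const n).
  { apply Rle_trans with ((/ q) ^ (n + 2) * (c ^ (n + 2) * rho c)).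
    - rewrite <- Rmult_assoc. apply Rmult_le_compat_r; assumption.
    - replace (moment_tail_const n)
        with ((/ q) ^ (n + 2) * (A * (INR (kap * (n + 1)) * beta) ^ (kap * (n + 1))))
        by (unfold moment_tail_const; ring).
      apply Rmult_le_compat_l.
      + apply pow_le, Rlt_le, Rinv_0_lt_compat. lra.
      + apply power_times_density_le. lra. }
  rewrite Hx_inv. apply (Rmult_le_reg_r x); [exact Hx|].
  replace (moment_tail_const n * / x * x) with (moment_tail_const n) by (field; lra).
  replace (x ^ (n + 2)) with (x ^ n * x * x) in Hbound by (rewrite pow_add; simpl; ring).
  assert (0 <= x ^ n * x * rho c)
    by (apply Rmult_le_pos; [apply Rmult_le_pos; [apply pow_le|]|]; lra).
  nra.
Qed.

(* Every n-th q-moment of the law is at most F 1 + moment_tail_const n q/(1-q):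
   the masses on ]0, 1] contribute at most F 1, the masses beyond 1 a geometric
   tail. *)
Lemma q_moment_le n m :
  zseries (fun j => powerRZ q (j * Z.of_nat n) * point_mass q F j) m ->
  m <= F 1 + moment_tail_const n * q / (1 - q).
Proof.
  intros (s1 & s2 & H1 & H2 & ->).
  assert (Hmass : forall j, 0 <= point_mass q F j)
    by (intro j; apply point_mass_nonneg, (cdf_increasing rho F HF rho_nonneg); lra).
  unfold point_mass in Hmass, H1, H2.
  assert (Hs1 : s1 <= F 1).
  { apply (series_le_of_partial_sums _ _ _ H1). intro J.
    assert (Htelescope : forall J, sum_f_R0 (fun k => F (powerRZ q (Z.of_nat k))
                                      - F (powerRZ q (Z.of_nat k + 1))) J
                               = F 1 - F (powerRZ q (Z.of_nat (S J)))).
    { intro J'. induction J' as [|J' IH]; [simpl; ring|].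
      rewrite tech5, IH. replace (Z.of_nat (S J') + 1)%Z with (Z.of_nat (S (S J'))) by lia. ring. }
    apply Rle_trans with (sum_f_R0 (fun k => F (powerRZ q (Z.of_nat k))
                                       - F (powerRZ q (Z.of_nat k + 1))) J).
    - apply sum_Rle. intros k _. pose proof (Hmass (Z.of_nat k)) as Hm.
      set (mass := F (powerRZ q (Z.of_nat k)) - F (powerRZ q (Z.of_nat k + 1))) in *.
      rewrite powerRZ_mul_nat, <- pow_powerRZ by lra.
      pose proof (pow_unit_interval (q ^ k) n (pow_unit_interval q k ltac:(lra))). nra.
    - rewrite Htelescope.
      pose proof (cdf_nonneg rho F HF rho_nonneg (powerRZ q (Z.of_nat (S J)))
                   (powerRZ_lt q _ ltac:(lra))). lra. }
  assert (Hs2 : Rabs s2 <= moment_tail_const n * q / (1 - q)).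
  { pose proof (moment_tail_const_nonneg n).
    apply (series_abs_le_geometric _ _ q _ H2); [lra | apply Rmult_le_pos; lra |].
    intro k. rewrite Rabs_right.
    - rewrite Rmult_assoc, tech_pow_Rmult. apply weighted_mass_tail_le.
    - apply Rle_ge, Rmult_le_pos; [apply powerRZ_le; lra | apply Hmass]. }
  pose proof (Rle_abs s2). lra.
Qed.

End HyperexpMoments.

Lemma Un_cv_exp_quadratic a b c : 0 < a ->
  Un_cv (fun N => exp (- a * (INR N * INR N) + b * INR N + c)) 0.
Proof.
  intros Ha eps Heps.
  destruct (INR_archimed 1 ((Rabs b + 1) / a + Rabs (c - ln eps) + 1)) as [N0 HN0]; [lra|].
  exists N0. intros N HN. apply le_INR in HN.
  unfold R_dist. rewrite Rminus_0_r, Rabs_right by apply Rle_ge, Rlt_le, exp_pos.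
  set (x := INR N) in *.
  pose proof (Rabs_pos b). pose proof (Rabs_pos (c - ln eps)).
  assert (Hba : 0 <= (Rabs b + 1) / a) by (apply Rdiv_le_0_compat; lra).
  assert (Hlin : Rabs b + 1 <= a * x).
  { replace (Rabs b + 1) with (a * ((Rabs b + 1) / a)) by (field; lra).
    apply Rmult_le_compat_l; lra. }
  assert (Hquad : - a * (x * x) + b * x <= - x).
  { pose proof (RRle_abs b). assert (0 <= x) by lra. nra. }
  pose proof (RRle_abs (c - ln eps)).
  rewrite <- (exp_ln eps Heps). apply exp_increasing. lra.
Qed.

(* y^p <= T^p exp(p y / T) for T > 0, from y <= T exp(y/T). *)
Lemma pow_le_exp_scaled y p T : 0 <= y -> 0 < T ->
  y ^ p <= exp (INR p * ln T + INR p * y / T).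
Proof.
  intros Hy HT.
  assert (Hlin : y <= T * exp (y / T)).
  { pose proof (exp_ineq1_le (y / T)) as Hexp. apply (Rmult_le_compat_l T) in Hexp; [|lra].
    replace (T * (1 + y / T)) with (T + y) in Hexp by (field; lra). lra. }
  apply Rle_trans with ((T * exp (y / T)) ^ p); [apply pow_incr; lra|].
  assert (HTe : 0 < T * exp (y / T)) by (apply Rmult_lt_0_compat; [lra | apply exp_pos]).
  rewrite <- (Rpower_pow p _ HTe). unfold Rpower.
  rewrite ln_mult, ln_exp by (lra || apply exp_pos). right. f_equal. field. lra.
Qed.

(* The moment bounds of the hyper-exponential law grow like exp(O(n log n)),
   which the Gaussian factor q^(tri N) overwhelms along n = 2N + 3.  The
   logarithm log(p beta) of the dominant factor (p beta)^p is linearised as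
   log T + p beta / T with T so large that the quadratic term p^2 beta / T
   stays below a quarter of the Gaussian exponent. *)
Section MomentGrowth.
Variables alpha beta gamma G q F1 D : R.
Variable kap : nat.
Hypotheses (Hb : 0 < beta) (Hq : 0 < q < 1) (HF1 : 0 <= F1) (HD : 0 < D).
Hypothesis HA : 0 <= hyperexp_coef alpha beta gamma G.

Let A := hyperexp_coef alpha beta gamma G.
Let lam := - ln q.
Let k := INR kap.
Let T := 1 + 16 * (k * k) * beta / lam.
Let M n := F1 + moment_tail_const alpha beta gamma G q kap n * q / (1 - q).
Let W := F1 + A * q / (1 - q).

Lemma lam_pos : 0 < lam.
Proof.
  unfold lam. pose proof (ln_increasing q 1 ltac:(lra) ltac:(lra)). rewrite ln_1 in *. lra.
Qed.

Lemma scale_T_props : 1 <= T /\ 0 <= ln T /\ k * k * beta / T <= lam / 16.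
Proof.
  pose proof lam_pos. assert (Hk : 0 <= k) by apply pos_INR.
  assert (HT : 1 <= T) by (unfold T; assert (0 <= 16 * (k * k) * beta / lam)
                                         by (apply Rdiv_le_0_compat; nra); lra).
  split; [exact HT | split; [rewrite <- ln_1; apply ln_le; lra|]].
  apply (Rmult_le_reg_r T); [lra|].
  unfold Rdiv at 1. rewrite Rmult_assoc, Rinv_l, Rmult_1_r by lra.
  unfold T. replace (lam / 16 * (1 + 16 * (k * k) * beta / lam)) with (lam / 16 + k * k * beta)
    by (field; lra). lra.
Qed.

Let tail_exponent n := INR (n + 2) * lam + (INR (kap * (n + 1)) * ln T
                        + INR (kap * (n + 1)) * (INR (kap * (n + 1)) * beta) / T).

Lemma moment_tail_const_le_exp n :
  moment_tail_const alpha beta gamma G q kap n <= A * exp (tail_exponent n) /\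
  1 <= exp (tail_exponent n).
Proof.
  destruct scale_T_props as (HT & HlnT & _). pose proof lam_pos.
  set (p := (kap * (n + 1))%nat). pose proof (pos_INR (n + 2)). pose proof (pos_INR p).
  split.
  - unfold moment_tail_const. fold A p. rewrite Rmult_assoc. apply Rmult_le_compat_l; [exact HA|].
    unfold tail_exponent. fold p. rewrite exp_plus. apply Rmult_le_compat.
    + apply pow_le, Rlt_le, Rinv_0_lt_compat. lra.
    + apply pow_le, Rmult_le_pos; [apply pos_INR | lra].
    + rewrite <- Rpower_pow by (apply Rinv_0_lt_compat; lra). unfold Rpower.
      rewrite ln_Rinv by lra. right. reflexivity.
    + apply pow_le_exp_scaled; [apply Rmult_le_pos; [apply pos_INR | lra] | lra].
  - rewrite <- exp_0. apply exp_le_compat. unfold tail_exponent. fold p.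
    assert (0 <= INR p * (INR p * beta) / T) by (apply Rdiv_le_0_compat; nra). nra.
Qed.

Let quadratic_exponent N := - (lam / 4) * (INR N * INR N)
  + (lam / 2 + 2 * Rabs (ln D) + 2 * lam + 2 * k * ln T) * INR N
  + (6 * lam + 3 * Rabs (ln D) + 4 * k * ln T).

Lemma total_exponent_le N :
  INR (2 * N + 3) * ln D + tail_exponent (2 * N + 3) + INR (triangular N) * ln q
  <= quadratic_exponent N.
Proof.
  destruct scale_T_props as (HT & HlnT & HkT). pose proof lam_pos.
  assert (Hk : 0 <= k) by apply pos_INR.
  set (x := INR N). assert (Hx : 0 <= x) by apply pos_INR.
  assert (Im : INR (2 * N + 3) = 2 * x + 3) by (unfold x; rewrite plus_INR, mult_INR; simpl; ring).
  assert (Ip : INR (kap * (2 * N + 3 + 1)) = k * (2 * x + 4))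
    by (unfold k; rewrite mult_INR, !plus_INR, mult_INR; fold x; simpl; ring).
  unfold tail_exponent, quadratic_exponent. fold x.
  rewrite INR_triangular, Im, plus_INR, Im, Ip. fold x.
  replace (ln q) with (- lam) by (unfold lam; ring).
  assert (Hsq : k * (2 * x + 4) * (k * (2 * x + 4) * beta) / T
                <= lam / 16 * ((2 * x + 4) * (2 * x + 4))).
  { replace (k * (2 * x + 4) * (k * (2 * x + 4) * beta) / T)
      with (k * k * beta / T * ((2 * x + 4) * (2 * x + 4))) by (field; lra).
    apply Rmult_le_compat_r; [nra | exact HkT]. }
  assert (HlnD : (2 * x + 3) * ln D <= (2 * x + 3) * Rabs (ln D))
    by (apply Rmult_le_compat_l; [lra | apply RRle_abs]).
  simpl INR. lra.
Qed.

Lemma moment_bound_term_le N :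
  0 <= D ^ (2 * N + 3) * M (2 * N + 3)%nat * q ^ triangular N
    <= W * exp (quadratic_exponent N).
Proof.
  set (m := (2 * N + 3)%nat).
  destruct (moment_tail_const_le_exp m) as [Hconst HZ].
  pose proof (moment_tail_const_nonneg alpha beta gamma G q kap Hb Hq HA m).
  assert (HAq : 0 <= A * q / (1 - q)) by (apply Rdiv_le_0_compat; nra).
  assert (Hq1 : 0 <= q / (1 - q)) by (apply Rdiv_le_0_compat; lra).
  assert (HW : 0 <= W) by (unfold W; lra).
  assert (HM : 0 <= M m)
    by (unfold M; apply Rplus_le_le_0_compat; [lra | apply Rdiv_le_0_compat; nra]).
  assert (HMZ : M m <= W * exp (tail_exponent m)).
  { assert (moment_tail_const alpha beta gamma G q kap m * (q / (1 - q))
              <= A * exp (tail_exponent m) * (q / (1 - q))) by (apply Rmult_le_compat_r; lra).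
    unfold M, W, Rdiv in *. nra. }
  assert (HDm : 0 < D ^ m) by (apply pow_lt; lra).
  assert (Hqt : 0 < q ^ triangular N) by (apply pow_lt; lra).
  split; [apply Rmult_le_pos; [apply Rmult_le_pos|]; lra|].
  apply Rle_trans with (W * (D ^ m * exp (tail_exponent m) * q ^ triangular N)).
  { replace (W * (D ^ m * exp (tail_exponent m) * q ^ triangular N))
      with (D ^ m * (W * exp (tail_exponent m)) * q ^ triangular N) by ring.
    apply Rmult_le_compat_r; [lra|]. apply Rmult_le_compat_l; lra. }
  apply Rmult_le_compat_l; [lra|].
  rewrite <- (Rpower_pow m D HD), <- (Rpower_pow (triangular N) q) by lra. unfold Rpower.
  rewrite <- !exp_plus. apply exp_le_compat.
  pose proof (total_exponent_le N). unfold m. lra.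
Qed.

Lemma moment_bound_vanishes :
  Un_cv (fun N => D ^ (2 * N + 3) * M (2 * N + 3)%nat * q ^ triangular N) 0.
Proof.
  apply (Un_cv_squeeze0 _ (fun N => W * exp (quadratic_exponent N))).
  - exact moment_bound_term_le.
  - apply Un_cv_scal0, Un_cv_exp_quadratic. pose proof lam_pos. lra.
Qed.

End MomentGrowth.

Lemma moment_bound_growth alpha beta gamma G q kap F1 :
  0 < beta -> 0 < q < 1 -> 0 <= F1 -> 0 <= hyperexp_coef alpha beta gamma G ->
  slow_moment_growth q (fun n => F1 + moment_tail_const alpha beta gamma G q kap n * q / (1 - q)).
Proof.
  intros Hb Hq HF1 HA D HD.
  exact (moment_bound_vanishes alpha beta gamma G q F1 D kap Hb Hq HF1 HD HA).
Qed.

Theorem mainTheorem8 :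
  forall (alpha beta gamma G : R) (F : R -> R),
    0 < alpha -> 0 < beta -> 0 < gamma ->
    is_Gamma (alpha / gamma) G ->
    is_cdf_of_density (hyperexp_density alpha beta gamma G) F ->
    forall q : R, 0 < q < 1 -> q_moment_determinate q F.
Proof.
  intros alpha beta gamma G F Ha Hb Hg HG HF q Hq.
  pose proof (hyperexp_coef_nonneg alpha beta gamma G Ha Hg HG) as HA.
  assert (Hrho : forall t, 0 < t -> 0 <= hyperexp_density alpha beta gamma G t)
    by (intros; apply hyperexp_density_nonneg, HA).
  destruct (exists_nat_multiple_ge gamma (1 + alpha) Hg ltac:(lra)) as (kap & Hkap & Hkap_gamma).
  apply (q_moment_determinate_of_growth q F
           (fun n => F 1 + moment_tail_const alpha beta gamma G q kap n * q / (1 - q)) Hq).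
  - exact (cdf_increasing _ F HF Hrho).
  - exact (q_moment_le alpha beta gamma G q F kap Ha Hb Hg Hq HF HA Hkap Hkap_gamma).
  - apply moment_bound_growth; auto.
    apply (cdf_nonneg _ F HF Hrho). lra.
Qed.
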